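(* Let $n$ be a security parameter and $F\colon\{0,1\}^{\tilde n}\to\{0,1\}^m$ a function. Fix a 2-universal family $\mathcal{G}=\{g\colon\{0,1\}^{\tilde n}\to\{0,1\}^\ell\}$ and define $F'(x,g)=(F(x),g,g(x))$ on $\{0,1\}^{\tilde n}\times\mathcal{G}$. Then: (i) if $F^{-1}$ has real max-entropy at most $k$, then $(F')^{-1}$ has real max-entropy at most $\max\{k-\ell+s,0\}$ for any $s=\omega(\log n)$; (ii) if $F^{-1}$ has $p$-accessible max-entropy at most $k$, then $(F')^{-1}$ has $(p+2^{-\Omega(s)})$-accessible max-entropy at most $\max\{k-\ell+s,0\}$ for any $s$.
   Context: $\mathcal{G}$ is 2-universal if for every $x\ne x'$, $\Pr_g[g(x)=g(x')]\le2^{-\ell}$ for $g$ uniform in $\mathcal{G}$. For a function $G$ with domain $\mathcal{D}$ and $X$ uniform on $\mathcal{D}$: $G^{-1}$ has real max-entropy at most $k$ if there is a negligible $\varepsilon(n)$ with $\Pr_x[\log|G^{-1}(G(x))|\le k]\ge1-\varepsilon(n)$. A $G$-collision-finder is a randomized algorithm $A$ with $A(x;r)\in G^{-1}(G(x))$ for all $x,r$; $R$ denotes uniform coins. $G^{-1}$ has $p$-accessible max-entropy at most $k$ if for every probabilistic polynomial-time $G$-collision-finder $A$ there are sets $\{\mathcal{L}(x)\}$, each of size at most $2^k$, with $x\in\mathcal{L}(x)$, such that $\Pr[A(X;R)\in\mathcal{L}(X)]\ge1-p$ for all sufficiently large $n$. *)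

From Stdlib Require Import Reals.
From mathcomp Require Import all_boot.

Set Implicit Arguments.
Unset Strict Implicit.
Unset Printing Implicit Defensive.

Local Open Scope R_scope.

Notation bits k := (k.-tuple bool).

Definition prodF (X Y : nat -> finType) : nat -> finType :=
  fun n => (X n * Y n)%type.

Definition Rleb (x y : R) : bool := if Rle_dec x y then true else false.

Definition prob (T : finType) (P : pred T) : R :=
  (INR #|[set x | P x]| / INR #|T|).

Definition log2 (x : R) : R := (ln x / ln 2).

Definition negligible (eps : nat -> R) : Prop :=
  forall c : nat, exists N : nat, forall n : nat, (N <= n)%N ->
    (Rabs (eps n) <= / (INR n ^ c)).

Definition omega_log (s : nat -> R) : Prop :=
  forall c : R, (0 < c) -> exists N : nat, forall n : nat, (N <= n)%N ->
    (c * ln (INR n) <= s n).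

Definition preimg (A B : finType) (G : A -> B) (x : A) : {set A} :=
  [set x' | G x' == G x].

Definition real_maxent_le (X Y : nat -> finType) (G : forall n, X n -> Y n)
    (k : nat -> R) : Prop :=
  exists eps : nat -> R, negligible eps /\
    forall n : nat,
      (1 - eps n <= prob (fun x : X n => Rleb (log2 (INR #|preimg (G n) x|)) (k n))).

(* randomized algorithms (one per security parameter n), with input and
   output in X n and uniform coins from the finite set coins n *)
Record alg (X : nat -> finType) := Alg {
  coins : nat -> finType;
  run : forall n, X n -> coins n -> X n }.
Arguments coins {X} a n.
Arguments run {X} a n x r.

(* G-collision-finder: A(x;r) in G^{-1}(G(x)) for all x, r (coin space
   nonempty so that uniform coins R make sense) *)
Definition collision_finder (X Y : nat -> finType) (G : forall n, X n -> Y n)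
    (A : alg X) : Prop :=
  (forall n, (0 < #|coins A n|)%N) /\
  forall n (x : X n) (r : coins A n), G n (run A n x r) = G n x.

Definition effClass := forall X : nat -> finType, alg X -> Prop.

Definition acc_maxent_le (X Y : nat -> finType) (G : forall n, X n -> Y n)
    (Eff : effClass) (p k : nat -> R) : Prop :=
  forall A : alg X, Eff X A -> collision_finder G A ->
    exists L : forall n, X n -> {set X n},
      (forall n (x : X n), (INR #|L n x| <= Rpower 2 (k n)) /\ x \in L n x) /\
      exists N : nat, forall n : nat, (N <= n)%N ->
        (1 - p n <= prob (fun xr : (X n * coins A n)%type =>
                             run A n xr.1 xr.2 \in L n xr.1)).

(* 2-universal family: descriptions d in D n, evaluated by ev n d *)
Definition two_universal (nt l : nat -> nat) (D : nat -> finType)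
    (ev : forall n, D n -> bits (nt n) -> bits (l n)) : Prop :=
  forall n (x x' : bits (nt n)), x != x' ->
    (prob (fun d : D n => ev n d x == ev n d x') <= / (2 ^ l n)).

Definition Fprime (nt m l : nat -> nat) (D : nat -> finType)
    (F : forall n, bits (nt n) -> bits (m n))
    (ev : forall n, D n -> bits (nt n) -> bits (l n)) :
    forall n, prodF (fun n => bits (nt n)) D n ->
              prodF (prodF (fun n => bits (m n)) D) (fun n => bits (l n)) n :=
  fun n xg => (F n xg.1, xg.2, ev n xg.2 xg.1).

(* the algorithm that samples g uniformly from D n (as part of its coins),
   runs A' on (x, g) and outputs the first component *)
Definition sample_and_project (X D : nat -> finType) (A' : alg (prodF X D)) : alg X :=
  @Alg X (prodF D (coins A'))
    (fun n x gr => (run A' n (x, gr.1) gr.2).1).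

From Stdlib Require Import Reals Lra.
From mathcomp Require Import all_boot.

Set Implicit Arguments.
Unset Strict Implicit.
Unset Printing Implicit Defensive.
Local Open Scope R_scope.

(* Fix x and a set S containing x with |S| <= 2^K.  Each x' <> x in S collides
   with x under a random hash g with probability at most 2^-l, so the expected
   number of such collisions is at most 2^(K-l); by Markov, more than
   M = 2^max(K-l+s, 0) collisions occur with probability at most 2 * 2^-s.
   (i) The F'-preimage of (x, g) is {(x', g) | x' in F^-1(F x), g x' = g x},
   so with S = F^-1(F x) it has at most M elements except with probability
   2 * 2^-s, which is negligible when s = omega(log n).
   (ii) A collision finder A' for F' yields one for F by sampling g itself and
   discarding g from the output.  Its sets L(x) are refined to
   L'(x, g) = {(x', g) | x' in L(x), g x' = g x}, which has at most M elements
   outside the same rare event and contains the output of A' whenever the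
   output of the projected algorithm lies in L(x). *)

Lemma INR_leq (m n : nat) : (m <= n)%N -> INR m <= INR n.
Proof. by move/leP; apply: le_INR. Qed.

Lemma INR_gt0 (n : nat) : (0 < n)%N -> 0 < INR n.
Proof. by move/ltP; apply: lt_0_INR. Qed.

Lemma Rinv_INR_ge0 (n : nat) : 0 <= / INR n.
Proof. by case: n => [|n]; [rewrite Rinv_0; lra | apply/Rlt_le/Rinv_0_lt_compat/INR_gt0]. Qed.

Lemma RlebP (x y : R) : reflect (x <= y) (Rleb x y).
Proof. by rewrite /Rleb; case: Rle_dec => h; constructor. Qed.

Lemma INR_sum_le (I : finType) (A : {pred I}) (f : I -> nat) (e : R) :
  (forall i, i \in A -> INR (f i) <= e) -> INR (\sum_(i in A) f i) <= INR #|A| * e.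
Proof.
move=> fA; rewrite -sum1_card.
apply: (big_ind2 (fun a b : nat => INR a <= INR b * e)) => [|a1 b1 a2 b2|i /fA];
  rewrite ?plus_INR /=; lra.
Qed.

Lemma INR_card_le_sum (I : finType) (A : {pred I}) (f : I -> nat) (e : R) :
  (forall i, i \in A -> e <= INR (f i)) -> INR #|A| * e <= INR (\sum_i f i).
Proof.
move=> fA; apply: (@Rle_trans _ (INR (\sum_(i in A) f i))).
  rewrite -sum1_card.
  apply: (big_ind2 (fun a b : nat => INR b * e <= INR a)) => [|a1 b1 a2 b2|i /fA];
    rewrite ?plus_INR /=; lra.
apply: INR_leq; rewrite big_mkcond /=; apply: leq_sum => i _; by case: (i \in A).
Qed.

Lemma sum_card_swap (I J : finType) (A : {pred J}) (E : I -> J -> bool) :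
  (\sum_i #|[set j in A | E i j]| = \sum_(j in A) #|[set i | E i j]|)%N.
Proof.
under eq_bigr do rewrite -sum1dep_card.
rewrite (exchange_big_dep (mem A)) /=; last by move=> i j _ /andP[].
by apply: eq_bigr => j jA; rewrite -sum1dep_card; apply: eq_bigl => i; rewrite jA.
Qed.

Lemma card_pair_sum (A B : finType) (Q : A -> B -> bool) :
  #|[set y : A * B | Q y.1 y.2]| = (\sum_a #|[set b | Q a b]|)%N.
Proof.
rewrite -sum1dep_card -(pair_big_dep xpredT Q (fun _ _ => 1%N)) /=.
by apply: eq_bigr => a _; rewrite sum1dep_card.
Qed.

Lemma prob_le (T : finType) (P Q : pred T) :
  (forall x, P x -> Q x) -> prob P <= prob Q.
Proof.
move=> PQ; rewrite /prob /Rdiv; apply: Rmult_le_compat_r.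
  exact: Rinv_INR_ge0.
by apply/INR_leq/subset_leq_card/subsetP => x; rewrite !inE; apply: PQ.
Qed.

Lemma prob_pred0 (T : finType) : prob (fun _ : T => false) = 0.
Proof. by rewrite /prob (_ : [set x : T | false] = set0) ?cards0 /Rdiv ?Rmult_0_l // -setP. Qed.

Lemma prob_and_ge (T : finType) (P Q : pred T) (a b : R) :
  a <= prob P -> prob (fun x => P x && ~~ Q x) <= b ->
  a - b <= prob (fun x => P x && Q x).
Proof.
suff : prob P <= prob (fun x => P x && Q x) + prob (fun x => P x && ~~ Q x) by lra.
rewrite /prob /Rdiv -Rmult_plus_distr_r -plus_INR.
apply: Rmult_le_compat_r.
  exact: Rinv_INR_ge0.
apply/INR_leq/(leq_trans _ (leq_card_setU _ _))/subset_leq_card/subsetP => x.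
by rewrite !inE; case: (P x); case: (Q x).
Qed.

Lemma prob_le_card (T : finType) (P : pred T) (e : R) : (0 < #|T|)%N ->
  prob P <= e <-> INR #|[set x | P x]| <= e * INR #|T|.
Proof.
move=> /INR_gt0 T_gt0; rewrite /prob; split => h.
  move: (Rmult_le_compat_r _ _ _ (Rlt_le _ _ T_gt0) h).
  by rewrite /Rdiv Rmult_assoc Rinv_l ?Rmult_1_r; lra.
apply: (Rmult_le_reg_r (INR #|T|)) => //.
by rewrite /Rdiv Rmult_assoc Rinv_l ?Rmult_1_r; lra.
Qed.

Lemma prob_fst (A B : finType) (P : pred A) : (0 < #|B|)%N ->
  prob (fun y : A * B => P y.1) = prob P.
Proof.
move=> /INR_gt0 B_gt0; rewrite /prob.
have -> : [set y : A * B | P y.1] = setX [set x | P x] [set: B].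
  by apply/setP => -[a b]; rewrite !inE andbT.
rewrite cardsX cardsT card_prod !mult_INR.
case: (posnP #|A|) => [->|/INR_gt0 A_gt0]; last by field; lra.
by rewrite /= /Rdiv Rmult_0_l !Rinv_0 !Rmult_0_r.
Qed.

Lemma prob_pair_le (A B : finType) (P : pred (A * B)) (e : R) :
  (0 < #|A|)%N -> (0 < #|B|)%N -> (forall a, prob (fun b => P (a, b)) <= e) ->
  prob P <= e.
Proof.
move=> A_gt0 B_gt0 Ple; rewrite prob_le_card ?card_prod ?muln_gt0 ?A_gt0 //.
have -> : [set y | P y] = [set y : A * B | P (y.1, y.2)].
  by apply/setP => -[a b]; rewrite !inE.
rewrite (card_pair_sum (fun a b => P (a, b))) mult_INR.
rewrite -Rmult_assoc (Rmult_comm e) Rmult_assoc.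
by apply: INR_sum_le => a _; rewrite -prob_le_card.
Qed.

Lemma prob_bij (A B : finType) (f : A -> B) (g : B -> A) (P : pred B) :
  cancel f g -> cancel g f -> prob P = prob (fun x => P (f x)).
Proof.
move=> fK gK; rewrite /prob (bij_eq_card (Bijective fK gK)).
have -> : [set y | P y] = f @: [set x | P (f x)].
  apply/setP => y; rewrite inE; apply/idP/imsetP => [Py | [x]].
    by exists (g y); rewrite ?inE gK.
  by rewrite inE => Px ->.
by rewrite card_imset //; apply: can_inj fK.
Qed.

Lemma ln2_gt0 : 0 < ln 2.
Proof. by have := ln_lt_2; lra. Qed.

Lemma Rpower2_gt0 (t : R) : 0 < Rpower 2 t.
Proof. exact: exp_pos. Qed.

Lemma Rpower2_le (a b : R) : a <= b -> Rpower 2 a <= Rpower 2 b.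
Proof. by apply: Rle_Rpower; lra. Qed.

Lemma Rpower2_ge1 (t : R) : 0 <= t -> 1 <= Rpower 2 t.
Proof. by move=> t_ge0; rewrite -(Rpower_O 2); [apply: Rpower2_le | lra]. Qed.

Lemma Rpower2_log2 (v : R) : 0 < v -> Rpower 2 (log2 v) = v.
Proof.
move=> v_gt0; have := ln2_gt0; rewrite /Rpower /log2 => ln2_gt0.
by rewrite (_ : ln v / ln 2 * ln 2 = ln v) ?exp_ln //; field; lra.
Qed.

Lemma log2_Rpower2 (t : R) : log2 (Rpower 2 t) = t.
Proof. by have := ln2_gt0; rewrite /log2 ln_Rpower => ?; field; lra. Qed.

Lemma log2_le (a b : R) : 0 < a -> a <= b -> log2 a <= log2 b.
Proof.
move=> a_gt0 [ab | <-]; last lra.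
apply: Rmult_le_compat_r; first by apply/Rlt_le/Rinv_0_lt_compat/ln2_gt0.
exact/Rlt_le/ln_increasing.
Qed.

Lemma log2_le_Rpower2 (v t : R) : 0 < v -> log2 v <= t <-> v <= Rpower 2 t.
Proof.
move=> v_gt0; split => [|vt].
  by rewrite -{2}(Rpower2_log2 v_gt0); apply: Rpower2_le.
by rewrite -(log2_Rpower2 t); apply: log2_le.
Qed.

Lemma inv_pow_succ_le (n c : nat) : (2 <= n)%N -> 2 * / INR n ^ c.+1 <= / INR n ^ c.
Proof.
move=> /(INR_leq (m := 2)) n_ge2.
have pow_gt0 : 0 < INR n ^ c by apply: pow_lt; rewrite /= in n_ge2; lra.
have : / INR n <= / 2 by apply: Rinv_le_contravar; rewrite /= in n_ge2 *; lra.
have := Rinv_0_lt_compat _ pow_gt0.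
rewrite /= Rinv_mult; nra.
Qed.

Lemma negligible_add (a b : nat -> R) :
  negligible a -> negligible b -> negligible (fun n => a n + b n).
Proof.
move=> a_negl b_negl c.
have [Na aN] := a_negl c.+1; have [Nb bN] := b_negl c.+1.
exists (maxn 2 (maxn Na Nb)) => n; rewrite !geq_max => /andP[n_ge2 /andP[nNa nNb]].
have := aN n nNa; have := bN n nNb; have := inv_pow_succ_le c n_ge2.
have := Rabs_triang (a n) (b n); lra.
Qed.

Lemma negligible_pow2_omega_log (s : nat -> R) :
  omega_log s -> negligible (fun n => 2 * Rpower 2 (- s n)).
Proof.
move=> s_omega c; have := ln2_gt0 => ln2_gt0.
have [|N sN] := s_omega (INR c.+1 / ln 2).
  by apply: Rdiv_lt_0_compat => //; apply: INR_gt0.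
exists (maxn 2 N) => n; rewrite geq_max => /andP[n_ge2 nN].
have n_gt0 : 0 < INR n by have := INR_leq n_ge2; rewrite /=; lra.
have pow_le : Rpower 2 (- s n) <= / INR n ^ c.+1.
  have -> : / INR n ^ c.+1 = Rpower 2 (- (INR c.+1 / ln 2 * ln (INR n))).
    by rewrite -Rpower_pow // -Rpower_Ropp /Rpower; congr exp; field; lra.
  by apply: Rpower2_le; have := sN n nN; lra.
rewrite Rabs_pos_eq; last by have := Rpower2_gt0 (- s n); lra.
by have := inv_pow_succ_le c n_ge2; lra.
Qed.

Section HashCollisions.

Variables (D T U : finType) (h : D -> T -> U) (eps : R).
Hypothesis D_gt0 : (0 < #|D|)%N.
Hypothesis eps_ge0 : 0 <= eps.
Hypothesis h_universal :
  forall x x' : T, x != x' -> prob (fun d => h d x == h d x') <= eps.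

Variables (S : {set T}) (x : T).
Hypothesis xS : x \in S.

Lemma sum_card_collisions_le :
  INR (\sum_d #|[set x' in S :\ x | h d x' == h d x]|) <= INR #|S| * (eps * INR #|D|).
Proof.
rewrite sum_card_swap.
apply: (Rle_trans _ _ _ (INR_sum_le (e := eps * INR #|D|) _)) => [x'|].
  by rewrite !inE => /andP[x'_neq _]; rewrite -prob_le_card //; apply: h_universal.
apply: Rmult_le_compat_r; first by have := pos_INR #|D|; nra.
by apply/INR_leq/subset_leq_card/subsetDl.
Qed.

Lemma card_collisions d :
  #|S :&: preimg (h d) x| = #|[set x' in S :\ x | h d x' == h d x]|.+1.
Proof.
rewrite (cardsD1 x) !inE xS eqxx; congr (_.+1); apply: eq_card => y.
by rewrite !inE andbA.
Qed.

Lemma prob_many_collisions (M : R) : 1 <= M ->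
  prob (fun d => ~~ Rleb (INR #|S :&: preimg (h d) x|) M) <= 2 * INR #|S| * eps / M.
Proof.
move=> M_ge1.
(* More than M >= 1 collisions force at least one besides x itself, hence
   more than M / 2 of them: this is where the factor 2 comes from. *)
pose bad := [set d | ~~ Rleb (INR #|S :&: preimg (h d) x|) M].
have bad_many d : d \in bad -> M / 2 <= INR #|[set x' in S :\ x | h d x' == h d x]|.
  rewrite inE card_collisions S_INR => /RlebP M_lt.
  suff : 1 <= INR #|[set x' in S :\ x | h d x' == h d x]| by lra.
  apply: (INR_leq (m := 1)); rewrite lt0n; apply/negP => /eqP e0.
  by move: M_lt; rewrite e0 /=; lra.
have := INR_card_le_sum bad_many; have := sum_card_collisions_le.
rewrite prob_le_card // => sum_le bad_le.
apply: (Rmult_le_reg_r (M / 2)); first lra.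
rewrite -/bad (_ : 2 * INR #|S| * eps / M * INR #|D| * (M / 2) =
                   INR #|S| * (eps * INR #|D|)); first lra.
by field; lra.
Qed.

End HashCollisions.

Lemma collision_bound_le_pow2 (S K s : R) (l : nat) : S <= Rpower 2 K ->
  2 * S * / 2 ^ l / Rpower 2 (Rmax (K - INR l + s) 0) <= 2 * Rpower 2 (- s).
Proof.
move=> S_le; set M := Rpower 2 (Rmax _ _).
have M_ge : Rpower 2 K * / 2 ^ l * Rpower 2 s <= M.
  rewrite -Rpower_pow -?Rpower_Ropp -?Rpower_plus; last lra.
  by apply: Rpower2_le; apply: Rle_trans (Rmax_l _ 0); lra.
have M_gt0 : 0 < M := Rpower2_gt0 _.
have pow_s_gt0 := Rpower2_gt0 s.
have pow_l_gt0 : 0 < 2 ^ l by apply: pow_lt; lra.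
have inv_pow_l_gt0 : 0 < / 2 ^ l by apply: Rinv_0_lt_compat.
rewrite Rpower_Ropp; apply: (Rmult_le_reg_r (M * Rpower 2 s)); first nra.
rewrite (_ : 2 * S * / 2 ^ l / M * (M * Rpower 2 s) = 2 * (S * / 2 ^ l * Rpower 2 s));
  last by field; lra.
rewrite (_ : 2 * / Rpower 2 s * (M * Rpower 2 s) = 2 * M); last by field; lra.
have : 0 < / 2 ^ l * Rpower 2 s by nra.
nra.
Qed.

Lemma bits_card_gt0 (k : nat) : (0 < #|{: bits k}|)%N.
Proof. by apply/card_gt0P; exists (nseq_tuple k false). Qed.

Lemma mem_preimg (A B : finType) (G : A -> B) (x : A) : x \in preimg G x.
Proof. by rewrite inE. Qed.

Lemma card_preimg_gt0 (A B : finType) (G : A -> B) (x : A) : 0 < INR #|preimg G x|.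
Proof. by apply/INR_gt0/card_gt0P; exists x; apply: mem_preimg. Qed.

Lemma acc_maxent_le_weaken (X Y : nat -> finType) (G : forall n, X n -> Y n)
    (Eff : effClass) (p p' k : nat -> R) :
  (forall n, p n <= p' n) -> acc_maxent_le G Eff p k -> acc_maxent_le G Eff p' k.
Proof.
move=> pp' G_acc A A_eff A_cf; have [L [L_ok [N LN]]] := G_acc A A_eff A_cf.
by exists L; split=> //; exists N => n nN; have := LN n nN; have := pp' n; lra.
Qed.

Section HashedFunction.

Variables (nt m l : nat -> nat) (F : forall n, bits (nt n) -> bits (m n)).
Variables (D : nat -> finType) (ev : forall n, D n -> bits (nt n) -> bits (l n)).
Arguments F : clear implicits.
Arguments ev : clear implicits.
Hypothesis D_gt0 : forall n, (0 < #|D n|)%N.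
Hypothesis ev_universal : two_universal ev.

Lemma prob_many_collisions_pair n (good : pred (bits (nt n)))
    (S : bits (nt n) -> {set bits (nt n)}) (K s : R) :
  (forall x, good x -> INR #|S x| <= Rpower 2 K /\ x \in S x) ->
  prob (fun y : bits (nt n) * D n => good y.1 &&
          ~~ Rleb (INR #|S y.1 :&: preimg (ev n y.2) y.1|)
                  (Rpower 2 (Rmax (K - INR (l n) + s) 0)))
  <= 2 * Rpower 2 (- s).
Proof.
move=> S_ok; apply: prob_pair_le (bits_card_gt0 _) (D_gt0 n) _ => x.
have [/S_ok[S_le xS] | _] /= := boolP (good x); last first.
  by rewrite prob_pred0; have := Rpower2_gt0 (- s); lra.
have eps_ge0 : 0 <= / 2 ^ l n by apply/Rlt_le/Rinv_0_lt_compat/pow_lt; lra.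
apply: Rle_trans (collision_bound_le_pow2 s (l n) S_le).
have M_ge1 : 1 <= Rpower 2 (Rmax (K - INR (l n) + s) 0).
  by apply: Rpower2_ge1; apply: Rmax_r.
exact: (prob_many_collisions (D_gt0 n) eps_ge0 (@ev_universal n) xS M_ge1).
Qed.

Lemma preimg_Fprime n (x : bits (nt n)) (g : D n) :
  preimg (Fprime F ev (n := n)) (x, g) =
    (fun x' => (x', g)) @: (preimg (F n) x :&: preimg (ev n g) x).
Proof.
apply/setP => -[x' g']; rewrite inE /Fprime /=.
apply/idP/imsetP => [/eqP[Fx' -> evx'] | [y]].
  by exists x' => //; rewrite !inE Fx' evx' !eqxx.
by rewrite !inE => /andP[/eqP Fy /eqP evy] [-> ->]; rewrite Fy evy.
Qed.

Lemma real_maxent_Fprime (k s : nat -> R) : omega_log s -> real_maxent_le F k ->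
  real_maxent_le (Fprime F ev) (fun n => Rmax (k n - INR (l n) + s n) 0).
Proof.
move=> s_omega [eps [eps_negl F_ent]].
exists (fun n => eps n + 2 * Rpower 2 (- s n)); split.
  exact: negligible_add eps_negl (negligible_pow2_omega_log s_omega).
move=> n; pose M := Rpower 2 (Rmax (k n - INR (l n) + s n) 0).
pose good x := Rleb (log2 (INR #|preimg (F n) x|)) (k n).
pose few (y : bits (nt n) * D n) :=
  Rleb (INR #|preimg (F n) y.1 :&: preimg (ev n y.2) y.1|) M.
have good_ge : 1 - eps n <= prob (fun y : bits (nt n) * D n => good y.1).
  by rewrite prob_fst.
have bad_le : prob (fun y => good y.1 && ~~ few y) <= 2 * Rpower 2 (- s n).
  apply: prob_many_collisions_pair => x /RlebP good_x; split; last exact: mem_preimg.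
  by rewrite -log2_le_Rpower2 //; apply: card_preimg_gt0.
have few_le : prob (fun y => good y.1 && few y) <=
    prob (fun xg => Rleb (log2 (INR #|preimg (Fprime F ev (n := n)) xg|))
                         (Rmax (k n - INR (l n) + s n) 0)).
  apply: prob_le => -[x g] /andP[_ /RlebP few_xg]; apply/RlebP.
  rewrite log2_le_Rpower2; last exact: card_preimg_gt0.
  by rewrite preimg_Fprime card_imset // => ? ? [].
apply: Rle_trans (Rle_trans _ _ _ _ (prob_and_ge good_ge bad_le)) few_le; lra.
Qed.

Lemma collision_finder_sample_and_project
    (A' : alg (prodF (fun n => bits (nt n)) D)) :
  collision_finder (Fprime F ev) A' -> collision_finder F (sample_and_project A').
Proof.
move=> [coins_gt0 A'_coll]; split => [n | n x [g r]] /=.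
  by rewrite card_prod muln_gt0 D_gt0 coins_gt0.
by have := A'_coll n (x, g) r; rewrite /Fprime => -[].
Qed.

(* The fallback [set xg] makes the size bound unconditional; it is only taken
   on the rare event of many collisions. *)
Definition hashed_list n (L : bits (nt n) -> {set bits (nt n)}) (M : R)
    (xg : bits (nt n) * D n) : {set bits (nt n) * D n} :=
  let C := L xg.1 :&: preimg (ev n xg.2) xg.1 in
  if Rleb (INR #|C|) M then (fun x' => (x', xg.2)) @: C else [set xg].

Lemma hashed_list_card n (L : bits (nt n) -> {set bits (nt n)}) (M : R) xg :
  1 <= M -> INR #|hashed_list L M xg| <= M.
Proof.
rewrite /hashed_list; case: ifP => [/RlebP C_le _ | _]; last by rewrite cards1.
by rewrite card_imset // => ? ? [].
Qed.

Lemma hashed_list_self n (L : bits (nt n) -> {set bits (nt n)}) (M : R) xg :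
  (forall x, x \in L x) -> xg \in hashed_list L M xg.
Proof.
move=> L_self; rewrite /hashed_list; case: ifP => _; last exact: set11.
by apply/imsetP; exists xg.1; [rewrite inE L_self mem_preimg | case: xg].
Qed.

Lemma mem_hashed_list n (L : bits (nt n) -> {set bits (nt n)}) (M : R)
    (x x' : bits (nt n)) (g : D n) :
  x' \in L x -> ev n g x' = ev n g x ->
  Rleb (INR #|L x :&: preimg (ev n g) x|) M ->
  (x', g) \in hashed_list L M (x, g).
Proof.
move=> x'L ev_eq few; rewrite /hashed_list /= few.
by apply/imsetP; exists x' => //; rewrite !inE x'L ev_eq eqxx.
Qed.

Lemma prob_hashed_list n (A' : alg (prodF (fun n => bits (nt n)) D))
    (L : bits (nt n) -> {set bits (nt n)}) (K s a : R) :
  collision_finder (Fprime F ev) A' ->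
  (forall x, INR #|L x| <= Rpower 2 K /\ x \in L x) ->
  a <= prob (fun y : bits (nt n) * (D n * coins A' n) =>
               (run A' n (y.1, y.2.1) y.2.2).1 \in L y.1) ->
  a - 2 * Rpower 2 (- s) <=
  prob (fun y : (bits (nt n) * D n) * coins A' n =>
          run A' n y.1 y.2 \in hashed_list L (Rpower 2 (Rmax (K - INR (l n) + s) 0)) y.1).
Proof.
move=> [coins_gt0 A'_coll] L_ok found_ge; set M := Rpower 2 (Rmax _ 0).
(* [(y.1.1, y.1.2)] rather than [y.1]: pairs have no definitional eta, and
   this is the form produced by regrouping the coins of the projection. *)
pose found (y : (bits (nt n) * D n) * coins A' n) :=
  (run A' n (y.1.1, y.1.2) y.2).1 \in L y.1.1.
pose few (xg : bits (nt n) * D n) :=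
  Rleb (INR #|L xg.1 :&: preimg (ev n xg.2) xg.1|) M.
rewrite (prob_bij _ (f := fun y => (y.1.1, (y.1.2, y.2)))
                   (g := fun y => ((y.1, y.2.1), y.2.2))) in found_ge;
  [| by case=> -[] | by case=> ? []].
have bad_le : prob (fun y => found y && ~~ few y.1) <= 2 * Rpower 2 (- s).
  apply: Rle_trans (prob_le (Q := fun y => ~~ few y.1) _) _; first by move=> y /andP[].
  rewrite (prob_fst (fun xg => ~~ few xg)) ?coins_gt0 //.
  exact: (@prob_many_collisions_pair n xpredT L K s (fun x _ => L_ok x)).
have few_le : prob (fun y => found y && few y.1) <=
    prob (fun y => run A' n y.1 y.2 \in hashed_list L M y.1).
  apply: prob_le => -[[x g] r] /andP[]; rewrite /found /few /=.
  have := A'_coll n (x, g) r; case: (run A' n (x, g) r) => x' g' /=.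
  by rewrite /Fprime /= => -[_ -> ev_eq] x'L; apply: mem_hashed_list.
by apply: Rle_trans few_le; apply: prob_and_ge found_ge bad_le.
Qed.

Lemma acc_maxent_Fprime (Eff : effClass) :
  (forall A' : alg (prodF (fun n => bits (nt n)) D),
      Eff _ A' -> Eff _ (sample_and_project A')) ->
  forall p k s : nat -> R, acc_maxent_le F Eff p k ->
  acc_maxent_le (Fprime F ev) Eff (fun n => p n + 2 * Rpower 2 (- s n))
    (fun n => Rmax (k n - INR (l n) + s n) 0).
Proof.
move=> Eff_closed p k s F_acc A' A'_eff A'_cf.
have [L [L_ok [N LN]]] :=
  F_acc _ (Eff_closed _ A'_eff) (collision_finder_sample_and_project A'_cf).
exists (fun n => hashed_list (L n) (Rpower 2 (Rmax (k n - INR (l n) + s n) 0))).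
split=> [n xg | ].
  split; last by apply: hashed_list_self => x; case: (L_ok n x).
  by apply: hashed_list_card; apply: Rpower2_ge1; apply: Rmax_r.
exists N => n nN.
apply: Rle_trans (prob_hashed_list (s n) A'_cf (L_ok n) (LN n nN)); lra.
Qed.

End HashedFunction.

Theorem lemma5p11 :
  exists c C : R, 0 < c /\ 0 < C /\
  forall (nt m l : nat -> nat) (F : forall n, bits (nt n) -> bits (m n))
         (D : nat -> finType) (ev : forall n, D n -> bits (nt n) -> bits (l n)),
    (forall n, (0 < #|D n|)%N) ->
    two_universal ev ->
    (* (i) real max-entropy *)
    (forall (k s : nat -> R),
        omega_log s ->
        real_maxent_le F k ->
        real_maxent_le (Fprime F ev) (fun n => Rmax (k n - INR (l n) + s n) 0))
    /\
    (* (ii) accessible max-entropy *)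
    (forall Eff : effClass,
        (forall A' : alg (prodF (fun n => bits (nt n)) D),
            Eff _ A' -> Eff _ (sample_and_project A')) ->
        forall (p k s : nat -> R),
        acc_maxent_le F Eff p k ->
        acc_maxent_le (Fprime F ev) Eff
          (fun n => p n + C * Rpower 2 (- (c * s n)))
          (fun n => Rmax (k n - INR (l n) + s n) 0)).
Proof.
exists 1, 2; do 2 (split; first lra).
move=> nt m l F D ev D_gt0 ev_universal; split; first exact: real_maxent_Fprime.
move=> Eff Eff_closed p k s F_acc.
apply: acc_maxent_le_weaken (acc_maxent_Fprime D_gt0 ev_universal Eff_closed s F_acc).
by move=> n; rewrite Rmult_1_l; lra.
Qed.
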